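(* Let $\Bbbk$ be a field, $n\ge2$, $q\in\Bbbk$ a primitive $n$-th root of unity, $C_n=\langle g\rangle$ the cyclic group of order $n$ and $A$ a unital associative $\Bbbk$-algebra. Let $\cdot:\Bbbk C_n\otimes A\to A$ be a partial action of $\Bbbk C_n$ on $A$. Then for each $w\in A$ such that $g^i\cdot w=q^{-i}(g^i\cdot1_A)w$ for all $0\le i\le n-1$, one has $(g^i\cdot w)^\ell=q^{-i\ell}(g^i\cdot1_A)w^\ell$ for all $\ell\ge1$ and $0\le i\le n-1$. Moreover, if the partial action is symmetric, then $(g^i\cdot w)^\ell=q^{-i\ell}w^\ell(g^i\cdot1_A)$.
   Context: $\Bbbk C_n$ is the group Hopf algebra with $g$ group-like. A partial action of a bialgebra $H$ on $A$ is a linear map $\cdot:H\otimes A\to A$ with $1_H\cdot a=a$, $h\cdot(ab)=(h_1\cdot a)(h_2\cdot b)$, $h\cdot(k\cdot a)=(h_1\cdot1_A)(h_2k\cdot a)$; it is symmetric if moreover $h\cdot(k\cdot a)=(h_1k\cdot a)(h_2\cdot1_A)$. *)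

From HB Require Import structures.
From mathcomp Require Import all_boot all_order all_algebra.
Set Implicit Arguments. Unset Strict Implicit. Unset Printing Implicit Defensive.
Import GRing.Theory.
Local Open Scope ring_scope.

(* A partial action of the group Hopf algebra K C_n on A, given by the linear
   maps act i = (g^i . _), i in C_n = 'Z_n (written additively, g^i <-> i).
   For H = K C_n the axioms for arbitrary h, k in H follow by (bi)linearity
   from the axioms on the group-like basis elements g^i (Delta g^i = g^i (x) g^i). *)
Definition is_partial_action (K : fieldType) (n : nat) (A : algType K)
    (act : 'Z_n -> {linear A -> A}) : Prop :=
  [/\ (forall a : A, act 0 a = a),
      (forall (i : 'Z_n) (a b : A), act i (a * b) = act i a * act i b) &
      (forall (i j : 'Z_n) (a : A), act i (act j a) = act i 1 * act (i + j) a)].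

Definition is_symmetric_partial_action (K : fieldType) (n : nat) (A : algType K)
    (act : 'Z_n -> {linear A -> A}) : Prop :=
  is_partial_action act /\
  (forall (i j : 'Z_n) (a : A), act i (act j a) = act (i + j) a * act i 1).

From HB Require Import structures.
From mathcomp Require Import all_boot all_order all_algebra.
Import GRing.Theory.
Local Open Scope ring_scope.

(* Write e := g^i . 1.  Multiplicativity gives (g^i . w) e = g^i . (w 1) = g^i . w,
   so cancelling the scalar in g^i . w = q^-i e w yields e w e = e w; hence
   (e w)^l = e w^l, and the scalar simply factors out of the power.  In the
   symmetric case g^i . (g^-i . a) equals both e a and a e, so e is central. *)

Lemma expr_mul_absorb (R : pzRingType) (e w : R) :
  e * w * e = e * w -> forall m, (e * w) ^+ m.+1 = e * w ^+ m.+1.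
Proof.
move=> ewe; elim=> [|m IHm]; first by rewrite !expr1.
by rewrite exprS IHm mulrA ewe -mulrA -exprS.
Qed.

Section PartialAction.

Context {K : fieldType} {n : nat} {A : algType K}.
Context {act : 'Z_n -> {linear A -> A}}.

Lemma act_mulr1 : is_partial_action act ->
  forall (i : 'Z_n) (a : A), act i a * act i 1 = act i a.
Proof. by case=> _ actM _ i a; rewrite -actM mulr1. Qed.

Lemma act_eigen_expr : is_partial_action act ->
  forall (c : K) (i : 'Z_n) (w : A), act i w = c *: (act i 1 * w) ->
  forall m, act i w ^+ m.+1 = c ^+ m.+1 *: (act i 1 * w ^+ m.+1).
Proof.
move=> pa c i w actw m; have [c0|c_neq0] := eqVneq c 0.
  by rewrite actw c0 scale0r !exprS !mul0r scale0r.
have ewe : act i 1 * w * act i 1 = act i 1 * w.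
  apply: (scalerI c_neq0); rewrite scalerAl -actw.
  exact: act_mulr1.
by rewrite actw exprZn expr_mul_absorb.
Qed.

Lemma symmetric_act1_central : is_symmetric_partial_action act ->
  forall (i : 'Z_n) (a : A), act i 1 * a = a * act i 1.
Proof.
case=> [[act0 _ actL] actR] i a.
by have := actR i (- i) a; rewrite actL addrN !act0.
Qed.

End PartialAction.

Theorem lemma3p5 (K : fieldType) (n : nat) (q : K) (A : algType K)
    (act : 'Z_n -> {linear A -> A}) :
  (2 <= n)%N -> n.-primitive_root q -> is_partial_action act ->
  forall w : A,
    (forall i : 'Z_n, act i w = q ^- i *: (act i 1 * w)) ->
    (forall (l : nat) (i : 'Z_n), (1 <= l)%N ->
        (act i w) ^+ l = q ^- (i * l) *: (act i 1 * w ^+ l)) /\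
    (is_symmetric_partial_action act ->
     forall (l : nat) (i : 'Z_n), (1 <= l)%N ->
        (act i w) ^+ l = q ^- (i * l) *: (w ^+ l * act i 1)).
Proof.
move=> _ _ pa w actw.
have actw_expr (l : nat) (i : 'Z_n) : (1 <= l)%N ->
    act i w ^+ l = q ^- (i * l) *: (act i 1 * w ^+ l).
  case: l => [//|l] _.
  by rewrite (act_eigen_expr pa _ _ _ (actw i)) exprVn exprM.
split=> // sym l i l_gt0.
by rewrite actw_expr // symmetric_act1_central.
Qed.
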